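(* Let $k = \mathbf{Q}$. Write the polynomials $A, \dots, F \in \mathbf{Q}[x_0,x_1,x_2]$ as \begin{align*} A & = A_1 x_0^2 + A_2 x_0x_1 + A_3 x_0x_2 + A_4 x_1^2 + A_5x_1x_2 + A_6 x_2^2,\\ B & = B_1 x_0^2 + B_2 x_0x_1 + B_3 x_0x_2 + B_4 x_1^2 + B_5x_1x_2 + B_6 x_2^2,\\ C & = C_1 x_0^2 + C_2 x_0x_1 + C_3 x_0x_2 + C_4 x_1^2 + C_5x_1x_2 + C_6 x_2^2,\\ D & = D_1 x_0^2 + D_2 x_0x_1 + D_3 x_0x_2 + D_4 x_1^2 + D_5x_1x_2 + D_6 x_2^2,\\ E & = E_1 x_0^2 + E_2 x_0x_1 + E_3 x_0x_2 + E_4 x_1^2 + E_5x_1x_2 + E_6 x_2^2,\\ F & = F_1 x_0^2 + F_2 x_0x_1 + F_3 x_0x_2 + F_4 x_1^2 + F_5x_1x_2 + F_6 x_2^2. \end{align*} Suppose the coefficients satisfy: (1) the $2$-adic valuation of $A_1, B_1, C_6, D_4, E_4, F_6$ is $0$; (2) the $2$-adic valuation of all other coefficients is $>0$. Then $\mathrm{inv}_2\, \alpha_1(x) = 0$ for all $x \in X_1(\mathbf{Q}_2)$.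
   Context: Let $Z \subset \mathbf{P}^2 \times \mathbf{P}^2$ (coordinates $x_0,x_1,x_2$ and $y_0,y_1,y_2$) be a smooth divisor of bidegree $(2,2)$ with equation $A y_0^2 + B y_0y_1 + C y_0y_2 + D y_1^2 + E y_1y_2 + F y_2^2$, where $A,\dots,F$ are quadratic forms in $x_0,x_1,x_2$. Let $Y \to \mathbf{P}^2\times\mathbf{P}^2$ be the double cover branched along $Z$; projection to the first factor makes $Y$ a quadric surface fibration over $\mathbf{P}^2$, whose discriminant curve $D_1$ is the sextic $\det M = 0$ with $M = \begin{pmatrix} 2A & B & C\\ B & 2D & E \\ C & E & 2F\end{pmatrix}$. Assume $D_1$ is smooth. Then $X_1$ is the K3 surface $w^2 = -\tfrac12 \det M$ in $\mathbf{P}(1,1,1,3)$ (double cover of $\mathbf{P}^2$ branched along $D_1$), and $\alpha_1 \in \mathrm{Br}(X_1)$ is the Brauer class of the Azumaya algebra coming from the Stein factorization of the relative Fano variety of lines of the fibration. In the function field, $\alpha_1$ is represented by each of the Hilbert symbols $(B^2-4AD, A)$, $(E^2-4DF, D)$, $(C^2-4AF, F)$. $\mathrm{inv}_2: \mathrm{Br}(\mathbf{Q}_2) \to \mathbf{Q}/\mathbf{Z}$ is the local invariant. *)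

From HB Require Import structures.
From mathcomp Require Import all_boot all_order all_algebra.
From mathcomp Require Import algC.
From mathcomp Require Import mpoly.
Set Implicit Arguments. Unset Strict Implicit. Unset Printing Implicit Defensive.
Import Order.TTheory GRing.Theory Num.Theory.
Local Open Scope ring_scope.

(* The paper's A_1,...,A_6 is  A 0, ..., A 5  (index shifted by one):  *)
(*   c 0 x0^2 + c 1 x0x1 + c 2 x0x2 + c 3 x1^2 + c 4 x1x2 + c 5 x2^2   *)
Definition quadform (n : nat) (c : 'I_6 -> rat) (i0 i1 i2 : 'I_n) : {mpoly rat[n]} :=
  (c (inord 0))%:MP * 'X_i0 * 'X_i0 + (c (inord 1))%:MP * 'X_i0 * 'X_i1
  + (c (inord 2))%:MP * 'X_i0 * 'X_i2 + (c (inord 3))%:MP * 'X_i1 * 'X_i1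
  + (c (inord 4))%:MP * 'X_i1 * 'X_i2 + (c (inord 5))%:MP * 'X_i2 * 'X_i2.

Definition q3 (c : 'I_6 -> rat) : {mpoly rat[3]} := quadform c (inord 0) (inord 1) (inord 2).

(* The bidegree (2,2) form defining Z in P^2 x P^2; variables
   0,1,2 = x0,x1,x2 and 3,4,5 = y0,y1,y2. *)
Definition Zpoly (A B C D E F : 'I_6 -> rat) : {mpoly rat[6]} :=
  let x0 : 'I_6 := inord 0 in let x1 : 'I_6 := inord 1 in let x2 : 'I_6 := inord 2 in
  let y0 : {mpoly rat[6]} := 'X_(inord 3) in
  let y1 : {mpoly rat[6]} := 'X_(inord 4) in
  let y2 : {mpoly rat[6]} := 'X_(inord 5) in
  quadform A x0 x1 x2 * y0 * y0 + quadform B x0 x1 x2 * y0 * y1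
  + quadform C x0 x1 x2 * y0 * y2 + quadform D x0 x1 x2 * y1 * y1
  + quadform E x0 x1 x2 * y1 * y2 + quadform F x0 x1 x2 * y2 * y2.

Definition Mmat (A B C D E F : 'I_6 -> rat) : 'M[{mpoly rat[3]}]_3 :=
  \matrix_(i < 3, j < 3)
    match val i, val j with
    | 0, 0 => 2%:R * q3 A | 0, 1 => q3 B | 0, _ => q3 C
    | 1, 0 => q3 B | 1, 1 => 2%:R * q3 D | 1, _ => q3 E
    | _, 0 => q3 C | _, 1 => q3 E | _, _ => 2%:R * q3 F
    end.

Definition disc_sextic (A B C D E F : 'I_6 -> rat) : {mpoly rat[3]} := \det (Mmat A B C D E F).

Definition ratC (q : rat) : algC := ratr q.

Definition plane_curve_smooth (P : {mpoly rat[3]}) : Prop :=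
  ~ exists x : 'I_3 -> algC,
      (exists i, x i != 0) /\
      (map_mpoly ratC P).@[x] = 0 /\
      (forall i : 'I_3, (map_mpoly ratC (mderiv i P)).@[x] = 0).

Definition biproj_hypersurface_smooth (G : {mpoly rat[6]}) : Prop :=
  ~ exists p : 'I_6 -> algC,
      (exists i : 'I_6, (i < 3)%N /\ p i != 0) /\
      (exists i : 'I_6, (3 <= i)%N /\ p i != 0) /\
      (map_mpoly ratC G).@[p] = 0 /\
      (forall i : 'I_6, (map_mpoly ratC (mderiv i G)).@[p] = 0).

Definition v2_zero (q : rat) : Prop :=
  q != 0 /\ ~~ (2 %| numq q)%Z /\ ~~ (2 %| denq q)%Z.
(* v_2(q) > 0  (including q = 0, of valuation +oo) *)
Definition v2_pos (q : rat) : Prop :=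
  (2 %| numq q)%Z /\ ~~ (2 %| denq q)%Z.

Definition in2n (n : nat) (q : rat) : bool :=
  (((2 ^ n)%N)%:Z %| numq q)%Z && ~~ (2 %| denq q)%Z.

(* The 2-adic integers Z_2 = lim Z/2^n: an element is represented by a *)
(* sequence of integers a with a (n+1) = a n  mod 2^n.                 *)
(* For a polynomial P with coefficients in Z_(2), P(a) = 0 in Z_2 iff  *)
(* P(a n) lies in 2^n Z_(2) for all n.                                  *)
Definition z2 := nat -> int.
Definition z2_compat (a : z2) : Prop :=
  forall n, (a n.+1 == a n %[mod ((2 ^ n)%N)%:Z])%Z.
Definition z2_unit (a : z2) : Prop := ~~ (2 %| a 1%N)%Z.

(* an element of Z_2 given as the (compatible) sequence of its
   rational approximations u n in Z_(2): zero iff u n in 2^n Z_(2) *)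
Definition z2val_zero (u : nat -> rat) : Prop := forall n, in2n n (u n).

Definition evalz2 (P : {mpoly rat[3]}) (x : 'I_3 -> z2) : nat -> rat :=
  fun n => P.@[fun i => ((x i n)%:~R : rat)].

(* The Hilbert symbol (u,v)_2 of two nonzero elements u, v of Z_2 is 1,
   i.e. the quaternion algebra (u,v) over Q_2 splits, i.e. its invariant
   inv_2 is 0: the conic  r^2 = u p^2 + v q^2  has a Q_2-point, i.e. a
   primitive Z_2-point. *)
Definition inv2_quat_zero (u v : nat -> rat) : Prop :=
  exists p q r : z2,
    [/\ z2_compat p, z2_compat q, z2_compat r,
        z2_unit p \/ z2_unit q \/ z2_unit r &
        forall n, in2n n ((r n)%:~R ^+ 2 - u n * (p n)%:~R ^+ 2 - v n * (q n)%:~R ^+ 2)].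

(* Q_2-points of X_1 :  w^2 = -1/2 det M  in P(1,1,1,3).  Every Q_2-point
   has a representative (x0:x1:x2:w) with x in Z_2^3 primitive and w in Z_2. *)
Definition X1_Q2_point (A B C D E F : 'I_6 -> rat) (x : 'I_3 -> z2) (w : z2) : Prop :=
  [/\ forall i, z2_compat (x i), z2_compat w, (exists i, z2_unit (x i)) &
      forall n, in2n n ((w n)%:~R ^+ 2 + 2%:R^-1 * evalz2 (disc_sextic A B C D E F) x n)].

(* alpha_1 is represented in the function field by the Hilbert symbol (f,g);
   at a Q_2-point x where f(x), g(x) are both nonzero, (f,g) is Azumaya near x
   and alpha_1(x) is the class of the quaternion algebra (f(x), g(x)). *)
Definition rep_inv_zero_at (f g : {mpoly rat[3]}) (x : 'I_3 -> z2) : Prop :=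
  ~ z2val_zero (evalz2 f x) -> ~ z2val_zero (evalz2 g x) ->
  inv2_quat_zero (evalz2 f x) (evalz2 g x).

Definition alpha1_inv_zero_at (A B C D E F : 'I_6 -> rat) (x : 'I_3 -> z2) : Prop :=
  [/\ rep_inv_zero_at (q3 B ^+ 2 - 4%:R * q3 A * q3 D) (q3 A) x,
      rep_inv_zero_at (q3 E ^+ 2 - 4%:R * q3 D * q3 F) (q3 D) x &
      rep_inv_zero_at (q3 C ^+ 2 - 4%:R * q3 A * q3 F) (q3 F) x].

(* At a point [x] of [X_1(Q_2)] with primitive coordinates some [x_i] is a 2-adic unit, and
   by the congruence conditions so are two of the forms at [x]: [A, B] if [i = 0], [D, E] if
   [i = 1], [F, C] if [i = 2].  Say [A(x), B(x)] are units.  Then [D1 = B^2 - 4AD = 1 mod 4],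
   so [(D1, A)_2 = 1], as [D1] or [D1 + 4A] is [1 mod 8] and hence a square.  The other two
   representatives are reached by the norm identities: [(b^2 - 4ac, a) = (b^2 - 4ac, c)], and
   [D1 D2 = (BE - 2CD)^2 - 4D W], [D1 D3 = (BC - 2AE)^2 - 4A W] with [W = -det M / 2 = w^2]
   on [X_1]. *)

From mathcomp Require Import all_boot all_order all_algebra.
From mathcomp Require Import algC mpoly.
From mathcomp Require Import ring zify.
From Stdlib Require Import Classical ClassicalEpsilon.
Set Implicit Arguments. Unset Strict Implicit. Unset Printing Implicit Defensive.
Import Order.TTheory GRing.Theory Num.Theory.
Local Open Scope ring_scope.

Definition v2_ge (n : nat) (q : rat) : Prop :=
  exists (m : int) (d : nat), odd d /\ q * d%:R = 2 ^+ n * m%:~R.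

Lemma v2_ge0 n : v2_ge n 0.
Proof. by exists 0, 1%N; split=> //; rewrite mul0r mulr0. Qed.

Lemma v2_geD n x y : v2_ge n x -> v2_ge n y -> v2_ge n (x + y).
Proof.
case=> m1 [d1 [o1 e1]] [m2 [d2 [o2 e2]]].
exists (m1 * d2%:Z + m2 * d1%:Z), (d1 * d2)%N; split; first by rewrite oddM o1 o2.
rewrite natrM intrD !intrM -!pmulrn.
transitivity ((x * d1%:R) * d2%:R + (y * d2%:R) * d1%:R); first by ring.
by rewrite e1 e2; ring.
Qed.

Lemma v2_geN n x : v2_ge n x -> v2_ge n (- x).
Proof.
case=> m [d [o e]]; exists (- m), d; split => //.
by rewrite mulNr e rmorphN /= mulrN.
Qed.

Lemma v2_geB n x y : v2_ge n x -> v2_ge n y -> v2_ge n (x - y).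
Proof. by move=> hx /v2_geN; apply: v2_geD. Qed.

Lemma v2_geM n k x y : v2_ge n x -> v2_ge k y -> v2_ge (n + k) (x * y).
Proof.
case=> m1 [d1 [o1 e1]] [m2 [d2 [o2 e2]]].
exists (m1 * m2), (d1 * d2)%N; split; first by rewrite oddM o1 o2.
rewrite natrM intrM exprD.
transitivity ((x * d1%:R) * (y * d2%:R)); first by ring.
by rewrite e1 e2; ring.
Qed.

Lemma v2_ge_le n k x : (n <= k)%N -> v2_ge k x -> v2_ge n x.
Proof.
move=> nk [m [d [o e]]]; exists (m * 2 ^+ (k - n)), d; split => //.
by rewrite e rmorphM rmorphXn /= -(subnKC nk) exprD addKn; ring.
Qed.

Lemma v2_ge_int (z : int) : v2_ge 0 z%:~R.
Proof. by exists z, 1%N; split=> //; rewrite mulr1 expr0 mul1r. Qed.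

Lemma v2_ge_one : v2_ge 0 1.
Proof. by exists 1, 1%N; split=> //; rewrite !mulr1. Qed.

Lemma v2_ge_nat (k : nat) : v2_ge 0 k%:R.
Proof. by have := v2_ge_int k; rewrite -pmulrn. Qed.

Lemma v2_ge_exp2 n : v2_ge n (2 ^+ n).
Proof. by exists 1, 1%N; split=> //; rewrite !mulr1. Qed.

Lemma v2_geMl n c x : v2_ge 0 c -> v2_ge n x -> v2_ge n (c * x).
Proof. exact: v2_geM. Qed.

Lemma v2_geMr n c x : v2_ge 0 c -> v2_ge n x -> v2_ge n (x * c).
Proof. by move=> hc hx; rewrite mulrC; apply: v2_geMl. Qed.

Lemma v2_ge_mul2X n k y : v2_ge n y -> v2_ge (k + n) (2 ^+ k * y).
Proof. exact/v2_geM/v2_ge_exp2. Qed.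

Lemma v2_ge_div2X k n x : v2_ge (k + n) x -> v2_ge n (x / 2 ^+ k).
Proof.
case=> m [d [o e]]; exists m, d; split => //.
have h2 : (2 ^+ k : rat) != 0 by rewrite expf_neq0.
by rewrite mulrAC e exprD; field.
Qed.

Lemma v2_one_unit : ~ v2_ge 1 1.
Proof.
case=> m [d [o]]; rewrite mul1r expr1 pmulrn -[2]/(2%:~R) -intrM => /intr_inj.
lia.
Qed.

Lemma v2_ge_subX k x : v2_ge k x -> ~ v2_ge k.+1 x -> v2_ge k.+1 (x - 2 ^+ k).
Proof.
case=> m [d [o e]] hn.
have m_odd : ~~ (2 %| m)%Z.
  apply/negP => /dvdzP [t mt]; apply: hn; exists t, d; split => //.
  by rewrite e mt rmorphM /= exprS; ring.
exists ((m - d%:Z) %/ 2)%Z, d; split => //.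
have md : (m%:~R - d%:R : rat) = ((m - d%:Z) %/ 2)%Z%:~R * 2.
  have ht : m - d%:Z = ((m - d%:Z) %/ 2)%Z * 2 by lia.
  by rewrite pmulrn -rmorphB /= {1}ht rmorphM.
rewrite mulrBl e; transitivity (2 ^+ k * (m%:~R - d%:R) : rat); first by ring.
by rewrite md exprS; ring.
Qed.

Lemma in2nP n q : in2n n q <-> v2_ge n q.
Proof.
split.
  move/andP=> [/dvdzP [k hk] h2].
  exists k, `|denq q|%N; split; first by lia.
  have -> : (`|denq q|%N%:R : rat) = (denq q)%:~R.
    by rewrite pmulrn gez0_abs // ltW // denq_gt0.
  by rewrite -numqE hk rmorphM /= -pmulrn natrX mulrC.
case=> m [d [o e]].
have E : numq q * d%:Z = 2 ^+ n * m * denq q.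
  apply: (@intr_inj rat); rewrite !rmorphM /= rmorphXn /= numqE -pmulrn.
  by rewrite mulrAC e; ring.
have E' : (`|numq q| * d = 2 ^ n * `|m| * `|denq q|)%N.
  by rewrite -[d]/(`|d%:Z|%N) -abszM E !abszM natz abszX.
apply/andP; split.
  rewrite /dvdz absz_nat.
  have : (2 ^ n %| `|numq q| * d)%N by rewrite E' -mulnA dvdn_mulr.
  by rewrite Gauss_dvdl // coprimeXl // coprime2n.
have : (`|denq q| %| `|numq q| * d)%N by rewrite E' dvdn_mull.
rewrite Gauss_dvdr; last by rewrite coprime_sym coprime_num_den.
move=> hd; apply/negP => h2.
have : (2 %| d)%N by apply: dvdn_trans hd.
by rewrite dvdn2 o.
Qed.

Lemma v2_unitM a b : v2_ge 0 a -> v2_ge 0 b -> ~ v2_ge 1 a -> ~ v2_ge 1 b -> ~ v2_ge 1 (a * b).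
Proof.
move=> a0 b0 a1 b1 ab1; apply: v2_one_unit.
have ha := v2_ge_subX a0 a1; have hb := v2_ge_subX b0 b1; rewrite expr0 in ha hb.
have -> : (1 : rat) = a * b - ((a - 1) * b + (b - 1)) by ring.
exact/(v2_geB ab1)/(v2_geD _ hb)/v2_geMr.
Qed.

(* An element of Z_2, given by rational approximations in Z_(2) converging 2-adically:
   [x n] is its class modulo [2^n]. *)
Definition z2seq (x : nat -> rat) : Prop :=
  (forall n, v2_ge 0 (x n)) /\ (forall n, v2_ge n (x n.+1 - x n)).

Definition z2zero (x : nat -> rat) : Prop := forall n, v2_ge n (x n).

Definition z2eq (x y : nat -> rat) : Prop := z2zero (fun n => x n - y n).

Section Z2seq.

Implicit Types (x y : nat -> rat).

Lemma z2seq_int x n : z2seq x -> v2_ge 0 (x n).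
Proof. by case. Qed.

Lemma z2seq_sub x m N : z2seq x -> (m <= N)%N -> v2_ge m (x N - x m).
Proof.
move=> [_ hx]; elim: N => [|N IH]; first by rewrite leqn0 => /eqP ->; rewrite subrr; apply: v2_ge0.
rewrite leq_eqVlt => /orP [/eqP <-|]; first by rewrite subrr; apply: v2_ge0.
rewrite ltnS => mN; have -> : x N.+1 - x m = (x N.+1 - x N) + (x N - x m) by ring.
exact/(v2_geD _ (IH mN))/(v2_ge_le mN).
Qed.

Lemma z2seq_eq x y : (forall n, x n = y n) -> z2seq y -> z2seq x.
Proof. by move=> e [y0 hy]; split=> n; rewrite !e. Qed.

Lemma z2zero_eq x y : (forall n, x n = y n) -> z2zero y -> z2zero x.
Proof. by move=> e hy n; rewrite e. Qed.

Lemma z2seq_cst c : v2_ge 0 c -> z2seq (fun _ => c).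
Proof. by move=> hc; split => n //; rewrite subrr; apply: v2_ge0. Qed.

Lemma z2seq_nat k : z2seq (fun _ => k%:R).
Proof. exact/z2seq_cst/v2_ge_nat. Qed.

Lemma z2seqD x y : z2seq x -> z2seq y -> z2seq (fun n => x n + y n).
Proof.
move=> [x0 hx] [y0 hy]; split => n; first exact: v2_geD.
have -> : x n.+1 + y n.+1 - (x n + y n) = (x n.+1 - x n) + (y n.+1 - y n) by ring.
exact: v2_geD.
Qed.

Lemma z2seqN x : z2seq x -> z2seq (fun n => - x n).
Proof.
move=> [x0 hx]; split => n; first exact: v2_geN.
by rewrite -opprD; apply: v2_geN.
Qed.

Lemma z2seqM x y : z2seq x -> z2seq y -> z2seq (fun n => x n * y n).
Proof.
move=> [x0 hx] [y0 hy]; split => n; first exact: v2_geMl.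
have -> : x n.+1 * y n.+1 - x n * y n = (x n.+1 - x n) * y n.+1 + x n * (y n.+1 - y n) by ring.
exact: v2_geD (v2_geMr _ _) (v2_geMl _ _).
Qed.

Lemma z2seqX2 x : z2seq x -> z2seq (fun n => x n ^+ 2).
Proof.
move=> hx; have [x0 hx'] := z2seqM hx hx.
by split => n; rewrite expr2 ?expr2; [apply: x0 | apply: hx'].
Qed.

Lemma z2seq_v2_ge x k N : z2seq x -> v2_ge k (x k) -> (k <= N)%N -> v2_ge k (x N).
Proof.
move=> hx xk kN; have -> : x N = (x N - x k) + x k by ring.
exact/(v2_geD _ xk)/z2seq_sub.
Qed.

Lemma z2seq_not_v2_ge x k N : z2seq x -> ~ v2_ge k (x k) -> (k <= N)%N -> ~ v2_ge k (x N).
Proof.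
move=> hx xk kN xN; apply: xk; have -> : x k = x N - (x N - x k) by ring.
exact/(v2_geB xN)/z2seq_sub.
Qed.

Lemma z2seq_valuation x : z2seq x -> ~ z2zero x ->
  exists k, (forall N, (k <= N)%N -> v2_ge k (x N)) /\ ~ v2_ge k.+1 (x k.+1).
Proof.
move=> hx nz.
have ex : exists n, ~~ in2n n (x n).
  apply: NNPP => hn; apply: nz => n; apply/in2nP.
  by apply: negbNE; apply/negP => h; apply: hn; exists n; rewrite h.
case: (ex_minnP ex) => m /negP hm hmin.
have m0 : (0 < m)%N.
  by case: m hm hmin => // hm _; exfalso; apply/hm/in2nP/z2seq_int.
have xm : v2_ge m.-1 (x m.-1).
  apply/in2nP; apply: negbNE; apply/negP => /hmin; lia.
exists m.-1; split; first by move=> N; apply: z2seq_v2_ge.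
by rewrite prednK // => /in2nP.
Qed.

Lemma v2_unit_div2X q k : v2_ge k q -> ~ v2_ge k.+1 q ->
  v2_ge 0 (q / 2 ^+ k) /\ ~ v2_ge 1 (q / 2 ^+ k).
Proof.
move=> h1 h2; split; first by apply: v2_ge_div2X; rewrite addn0.
move=> /(v2_ge_mul2X k); rewrite addn1; apply: contra_not h2 => h.
by have -> : q = 2 ^+ k * (q / 2 ^+ k) by field; rewrite expf_neq0.
Qed.

Lemma z2seq_nonzeroM x y : z2seq x -> z2seq y -> ~ z2zero x -> ~ z2zero y ->
  ~ z2zero (fun n => x n * y n).
Proof.
move=> hx hy nx ny xy0.
case: (z2seq_valuation hx nx) => k [xk xk1]; case: (z2seq_valuation hy ny) => l [yl yl1].
pose N := (k + l).+1.
have kN : (k < N)%N by rewrite /N; lia.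
have lN : (l < N)%N by rewrite /N; lia.
have [a0 a1] := v2_unit_div2X (xk N (ltnW kN)) (z2seq_not_v2_ge hx xk1 kN).
have [b0 b1] := v2_unit_div2X (yl N (ltnW lN)) (z2seq_not_v2_ge hy yl1 lN).
apply: (v2_unitM a0 b0 a1 b1).
have := xy0 N; rewrite /N -addn1 => /v2_ge_div2X.
by rewrite exprD mulf_div.
Qed.

Lemma z2_nonzero_cst c : ~ v2_ge 1 c -> ~ z2zero (fun _ => c).
Proof. by move=> h hz; apply/h/hz. Qed.

Lemma z2_nonzero_exp2 k : ~ z2zero (fun _ => (2 : rat) ^+ k).
Proof.
move=> h; apply: v2_one_unit; have := h k.+1; rewrite -addn1 => /v2_ge_div2X.
by rewrite divff // expf_neq0.
Qed.

Lemma z2zero_cancel x y : z2seq x -> z2seq y -> ~ z2zero x ->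
  z2zero (fun n => x n * y n) -> z2zero y.
Proof. by move=> hx hy nx xy0; apply: NNPP => ny; apply: (z2seq_nonzeroM hx hy nx ny). Qed.

Lemma z2_nonzero_cstM c x : v2_ge 0 c -> ~ z2zero (fun _ => c) -> z2seq x -> ~ z2zero x ->
  ~ z2zero (fun n => c * x n).
Proof. by move=> c0 nc hx; apply: z2seq_nonzeroM nc => //; apply: z2seq_cst. Qed.

Lemma z2_nonzero_2 : ~ z2zero (fun _ => 2 : rat).
Proof. by have := z2_nonzero_exp2 (k := 1); rewrite expr1. Qed.

Lemma z2_nonzero_4 : ~ z2zero (fun _ => 4 : rat).
Proof. by have := z2_nonzero_exp2 (k := 2); rewrite expr2. Qed.

End Z2seq.

Ltac z2seq_auto := repeat first
  [ assumption | apply: z2seq_nat | apply: z2seqX2 | apply: z2seqD | apply: z2seqN | apply: z2seqM ].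

(* Z_(2) / 2^n Z_(2) = Z / 2^n Z: invert the odd denominator modulo [2^n] by Bezout. *)
Lemma int_approx_ex q n : v2_ge 0 q -> exists z : int, v2_ge n (z%:~R - q).
Proof.
case=> m [d [o e]]; rewrite expr0 mul1r in e.
have [a _] := Bezoutl d (expn_gt0 2 n).
have -> : gcdn (2 ^ n) d = 1%N by apply/eqP/coprimeXl; rewrite coprime2n.
case/dvdnP => t ht.
exists (- (m * a%:Z)), (- (m * t%:Z)), d; split => //.
have hd : (d%:R : rat) != 0 by rewrite pnatr_eq0; case: (d) o.
have ht' : (1 + a%:R * d%:R : rat) = t%:R * 2 ^+ n.
  by have := congr1 (fun k : nat => (k%:R : rat)) ht; rewrite /= natrD !natrM natrX.
rewrite !rmorphN !rmorphM /= -!pmulrn (_ : q = m%:~R / d%:R); last by rewrite -e; field.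
transitivity (- (m%:~R * (1 + a%:R * d%:R)) : rat); first by field.
by rewrite ht'; ring.
Qed.

Definition int_approx q n (hq : v2_ge 0 q) : int :=
  proj1_sig (constructive_indefinite_description _ (int_approx_ex n hq)).

Lemma int_approxP q n hq : v2_ge n ((@int_approx q n hq)%:~R - q).
Proof. by rewrite /int_approx; case: constructive_indefinite_description. Qed.

Definition z2_of_seq (p : nat -> rat) (hp : forall n, v2_ge 0 (p n)) : z2 :=
  fun n => int_approx n (hp n).

Lemma v2_ge_intP n (z : int) : v2_ge n z%:~R <-> ((2 ^ n)%N%:Z %| z)%Z.
Proof. by rewrite -in2nP /in2n numq_int denq_int andbT. Qed.

Section IntegralRepresentative.

Variables (p : nat -> rat) (hp : z2seq p).

Let P := z2_of_seq (proj1 hp).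

Lemma z2_of_seqP n : v2_ge n ((P n)%:~R - p n).
Proof. exact: int_approxP. Qed.

Lemma z2_of_seq_compat : z2_compat P.
Proof.
move=> n; rewrite eqz_mod_dvd -v2_ge_intP rmorphB /=.
have -> : ((P n.+1)%:~R - (P n)%:~R : rat) =
  ((P n.+1)%:~R - p n.+1) + (p n.+1 - p n) - ((P n)%:~R - p n) by ring.
apply: v2_geB (z2_of_seqP n); apply: v2_geD (proj2 hp n).
exact: v2_ge_le (z2_of_seqP n.+1).
Qed.

Lemma z2_of_seq_unit : ~ v2_ge 1 (p 1%N) -> z2_unit P.
Proof.
move=> h; apply/negP => /(v2_ge_intP 1) P1; apply: h.
have -> : p 1%N = (P 1%N)%:~R - ((P 1%N)%:~R - p 1%N) by ring.
exact: v2_geB P1 (z2_of_seqP 1).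
Qed.

Lemma z2_of_seqX2 n : v2_ge n ((P n)%:~R ^+ 2 - p n ^+ 2).
Proof.
have -> : (P n)%:~R ^+ 2 - p n ^+ 2 = ((P n)%:~R - p n) * ((P n)%:~R + p n) by ring.
exact/(v2_geMr _ (z2_of_seqP n))/(v2_geD (v2_ge_int _))/z2seq_int.
Qed.

End IntegralRepresentative.

Definition conic_sol (u v p q r : nat -> rat) : Prop :=
  z2eq (fun n => r n ^+ 2) (fun n => u n * p n ^+ 2 + v n * q n ^+ 2).

(* The Hilbert symbol [(u, v)_2] is 1: [r^2 = u p^2 + v q^2] has a nontrivial Z_2-point. *)
Definition hilbert1 (u v : nat -> rat) : Prop :=
  exists p q r : nat -> rat, [/\ z2seq p, z2seq q, z2seq r, conic_sol u v p q r &
    ~ [/\ z2zero p, z2zero q & z2zero r]].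

Definition hilbert1_nonzero (u v : nat -> rat) : Prop :=
  ~ z2zero u -> ~ z2zero v -> hilbert1 u v.

Lemma primitive_conic_sol_inv2 u v p q r : z2seq u -> z2seq v ->
  z2seq p -> z2seq q -> z2seq r -> conic_sol u v p q r ->
  [\/ ~ v2_ge 1 (p 1%N), ~ v2_ge 1 (q 1%N) | ~ v2_ge 1 (r 1%N)] ->
  inv2_quat_zero u v.
Proof.
move=> hu hv hp hq hr sol prim.
exists (z2_of_seq (proj1 hp)), (z2_of_seq (proj1 hq)), (z2_of_seq (proj1 hr)); split.
- exact: z2_of_seq_compat.
- exact: z2_of_seq_compat.
- exact: z2_of_seq_compat.
- by case: prim => h; [left | right; left | right; right]; apply: z2_of_seq_unit.
move=> n; apply/in2nP.
set P := z2_of_seq (proj1 hp) n; set Q := z2_of_seq (proj1 hq) n.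
set R := z2_of_seq (proj1 hr) n.
have -> : (R%:~R ^+ 2 - u n * P%:~R ^+ 2 - v n * Q%:~R ^+ 2 : rat) =
  (r n ^+ 2 - (u n * p n ^+ 2 + v n * q n ^+ 2)) + (R%:~R ^+ 2 - r n ^+ 2)
  - u n * (P%:~R ^+ 2 - p n ^+ 2) - v n * (Q%:~R ^+ 2 - q n ^+ 2) by ring.
apply: v2_geB; last exact/v2_geMl/z2_of_seqX2/z2seq_int.
apply: v2_geB; last exact/v2_geMl/z2_of_seqX2/z2seq_int.
exact/(v2_geD (sol n))/z2_of_seqX2.
Qed.

Definition z2shift (k : nat) (x : nat -> rat) (n : nat) : rat := x (n + k + k)%N / 2 ^+ k.

Section Shift.

Variables (k : nat) (x : nat -> rat) (hx : z2seq x).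
Hypothesis xk : forall N, (k <= N)%N -> v2_ge k (x N).

Lemma z2seq_shift : z2seq (z2shift k x).
Proof.
split => n; rewrite /z2shift.
  by apply: v2_ge_div2X; rewrite addn0; apply: xk; rewrite leq_addl.
rewrite -mulrBl; apply: v2_ge_div2X.
by rewrite !addSn; apply: (v2_ge_le _ (proj2 hx _)); lia.
Qed.

Lemma z2shift_unit : ~ v2_ge k.+1 (x k.+1) -> ~ v2_ge 1 (z2shift k x 1%N).
Proof.
move=> xk1 /(v2_ge_mul2X k); rewrite addn1 /z2shift mulrC divfK ?expf_neq0 //.
by apply: (z2seq_not_v2_ge hx xk1); lia.
Qed.

End Shift.

Lemma conic_sol_shift u v p q r k : z2seq u -> z2seq v -> conic_sol u v p q r ->
  (forall N, (k <= N)%N -> v2_ge k (p N)) -> (forall N, (k <= N)%N -> v2_ge k (q N)) ->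
  conic_sol u v (z2shift k p) (z2shift k q) (z2shift k r).
Proof.
move=> hu hv sol pk qk n; rewrite /z2shift; set N := (n + k + k)%N.
have kN : (k <= N)%N by rewrite /N; lia.
have nN : (n <= N)%N by rewrite /N; lia.
have -> : (r N / 2 ^+ k) ^+ 2 - (u n * (p N / 2 ^+ k) ^+ 2 + v n * (q N / 2 ^+ k) ^+ 2)
   = ((r N ^+ 2 - (u N * p N ^+ 2 + v N * q N ^+ 2)) + (u N - u n) * p N ^+ 2
      + (v N - v n) * q N ^+ 2) / 2 ^+ (k + k).
  by rewrite exprD; field; rewrite expf_neq0.
apply: v2_ge_div2X; rewrite addnC.
apply: v2_geD; first apply: v2_geD.
- by rewrite /N addnA; apply: sol.
- by rewrite expr2; apply/(v2_geM (z2seq_sub hu nN))/v2_geM; apply: pk.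
- by rewrite expr2; apply/(v2_geM (z2seq_sub hv nN))/v2_geM; apply: qk.
Qed.

(* Divide a nontrivial solution by the largest power of 2 dividing all of [p, q, r]. *)
Lemma hilbert1_primitive u v : z2seq u -> z2seq v -> hilbert1 u v ->
  exists p q r, [/\ z2seq p, z2seq q, z2seq r, conic_sol u v p q r &
    [\/ ~ v2_ge 1 (p 1%N), ~ v2_ge 1 (q 1%N) | ~ v2_ge 1 (r 1%N)]].
Proof.
move=> hu hv [p [q [r [hp hq hr sol nz]]]].
pose divisible n := [&& in2n n (p n), in2n n (q n) & in2n n (r n)].
have ex : exists n, ~~ divisible n.
  apply: NNPP => hn; apply: nz.
  have H n : divisible n by apply: negbNE; apply/negP => h; apply: hn; exists n.
  by split => n; have /and3P [/in2nP ? /in2nP ? /in2nP ?] := H n.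
case: (ex_minnP ex) => m hm hmin.
have m0 : (0 < m)%N.
  case: m hm hmin => // /negP h _; exfalso; apply: h.
  by apply/and3P; split; apply/in2nP; apply: z2seq_int.
set k := m.-1.
have /and3P [/in2nP pk /in2nP qk /in2nP rk] : divisible k.
  by apply: negbNE; apply/negP => /hmin; rewrite /k; lia.
have fp N := z2seq_v2_ge (N := N) hp pk; have fq N := z2seq_v2_ge (N := N) hq qk.
have fr N := z2seq_v2_ge (N := N) hr rk.
exists (z2shift k p), (z2shift k q), (z2shift k r); split.
- exact: z2seq_shift.
- exact: z2seq_shift.
- exact: z2seq_shift.
- exact: conic_sol_shift.
have : ~~ divisible k.+1 by rewrite /k prednK.
case/nandP => [/negP h|/nandP [/negP h|/negP h]]; [apply: Or31 | apply: Or32 | apply: Or33];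
  by apply: z2shift_unit => // /in2nP.
Qed.

Lemma hilbert1_inv2 u v : z2seq u -> z2seq v -> hilbert1 u v -> inv2_quat_zero u v.
Proof.
move=> hu hv /(hilbert1_primitive hu hv) [p [q [r [hp hq hr sol prim]]]].
exact: primitive_conic_sol_inv2 sol prim.
Qed.

(* Hensel lifting of the square root of [u = 1 mod 8]: if [s] is odd and
   [s^2 = u mod 2^(k+1)] but not mod [2^(k+2)], then [(s + 2^k)^2 = u mod 2^(k+2)] for [k >= 2]. *)
Fixpoint hensel_sqrt (u : nat -> rat) (k : nat) : int :=
  if k is k'.+1 then
    let s := hensel_sqrt u k' in
    if (k' < 2)%N || in2n k'.+2 ((s%:~R : rat) ^+ 2 - u k'.+2) then s else s + 2 ^+ k'
  else 1.

Lemma hensel_sqrtP u : z2seq u -> v2_ge 3 (u 3%N - 1) -> forall k,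
  [/\ v2_ge 1 ((hensel_sqrt u k)%:~R - 1), v2_ge k.+1 ((hensel_sqrt u k)%:~R ^+ 2 - u k.+1)
    & (k <= 2)%N -> hensel_sqrt u k = 1].
Proof.
move=> hu u3.
have low j : (j <= 3)%N -> v2_ge j (1 - u j).
  move=> hj; have -> : 1 - u j = - (u 3%N - 1) + (u 3%N - u j) by ring.
  exact/(v2_geD (v2_geN (v2_ge_le hj u3)))/z2seq_sub.
elim=> [|k [IH1 IH2 IH3]].
  by split => //=; rewrite ?subrr ?expr1n; [apply: v2_ge0 | apply: low].
rewrite /=; case: ifP => [/orP [k2|/in2nP sq]|].
- rewrite IH3; last by lia.
  by split => //; rewrite ?subrr ?expr1n; [apply: v2_ge0 | apply: low].
- by split => // k2; apply: IH3; lia.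
move/negbT; rewrite negb_or -leqNgt => /andP [k2 /negP sq].
set s := hensel_sqrt u k.
have sq' : ~ v2_ge k.+2 (s%:~R ^+ 2 - u k.+2) by move/in2nP.
have sq1 : v2_ge k.+1 (s%:~R ^+ 2 - u k.+2).
  have -> : s%:~R ^+ 2 - u k.+2 = (s%:~R ^+ 2 - u k.+1) - (u k.+2 - u k.+1) by ring.
  exact: v2_geB IH2 (proj2 hu _).
rewrite rmorphD rmorphXn /=; split; last by lia.
- have -> : s%:~R + 2 ^+ k - 1 = (s%:~R - 1) + 2 ^+ k :> rat by ring.
  by apply/(v2_geD IH1)/(v2_ge_le _ (v2_ge_exp2 k)); lia.
- have -> : (s%:~R + 2 ^+ k) ^+ 2 - u k.+2 =
    ((s%:~R ^+ 2 - u k.+2) - 2 ^+ k.+1) + 2 ^+ k.+1 * ((s%:~R - 1) + 2)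
    + 2 ^+ k * 2 ^+ k :> rat by rewrite !exprS; ring.
  apply: v2_geD; first apply: v2_geD.
  + exact: v2_ge_subX.
  + by have := v2_ge_mul2X k.+1 (v2_geD IH1 (v2_ge_exp2 1)); rewrite expr1 addn1.
  + by apply: (v2_ge_le _ (v2_geM (v2_ge_exp2 k) (v2_ge_exp2 k))); lia.
Qed.

Lemma z2seq_sqrt u : z2seq u -> v2_ge 3 (u 3%N - 1) ->
  exists s, z2seq s /\ z2eq (fun n => s n ^+ 2) u.
Proof.
move=> hu u3; have S := hensel_sqrtP hu u3.
exists (fun n => (hensel_sqrt u n)%:~R); split.
  split => n; first exact: v2_ge_int.
  rewrite /=; case: ifP => _; first by rewrite subrr; apply: v2_ge0.
  by rewrite rmorphD rmorphXn /= addrAC subrr add0r; apply: v2_ge_exp2.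
move=> n; have [_ h _] := S n.
have -> : (hensel_sqrt u n)%:~R ^+ 2 - u n =
  ((hensel_sqrt u n)%:~R ^+ 2 - u n.+1) + (u n.+1 - u n) by ring.
exact: v2_geD (v2_ge_le _ h) (proj2 hu n).
Qed.

(* If [u = 1 mod 8] then [u] is a square; otherwise [u + 4 v = 1 mod 8] is one,
   i.e. [(1, 2, s)] solves [r^2 = u p^2 + v q^2]. *)
Lemma hilbert1_1mod4 u v : z2seq u -> z2seq v -> v2_ge 2 (u 2%N - 1) -> ~ v2_ge 1 (v 1%N) ->
  hilbert1 u v.
Proof.
move=> hu hv u2 v1.
have nz1 q r : ~ [/\ z2zero (fun _ => 1 : rat), z2zero q & z2zero r].
  by case=> h _ _; apply: (z2_nonzero_cst v2_one_unit).
have u3 : v2_ge 2 (u 3%N - 1).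
  have -> : u 3%N - 1 = (u 3%N - u 2%N) + (u 2%N - 1) by ring.
  exact: v2_geD (proj2 hu _) u2.
case: (classic (v2_ge 3 (u 3%N - 1))) => [u8|/(v2_ge_subX u3) u4].
  have [s [hs s2]] := z2seq_sqrt hu u8.
  exists (fun _ => 1), (fun _ => 0), s; split.
  - exact: z2seq_cst v2_ge_one.
  - exact: z2seq_cst (v2_ge0 0).
  - exact: hs.
  - by move=> n; rewrite expr1n expr0n mulr0 mulr1 addr0; apply: s2.
  - exact: nz1.
pose w n := u n + v n * 4%:R.
have hw : z2seq w by apply/(z2seqD hu)/(z2seqM hv)/z2seq_nat.
have w8 : v2_ge 3 (w 3%N - 1).
  have v3 : v2_ge 1 (v 3%N - 1).
    have -> : v 3%N - 1 = (v 3%N - v 1%N) + (v 1%N - 1) by ring.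
    by apply: v2_geD (z2seq_sub _ _) _ => //; have := v2_ge_subX (z2seq_int 1 hv) v1.
  have -> : w 3%N - 1 = ((u 3%N - 1 - 2 ^+ 2) + 2 ^+ 2 * (v 3%N - 1)) + 2 ^+ 3.
    by rewrite /w !exprS expr0; ring.
  exact/(v2_geD _ (v2_ge_exp2 3))/(v2_geD u4)/v2_ge_mul2X.
have [s [hs s2]] := z2seq_sqrt hw w8.
exists (fun _ => 1), (fun _ => 2%:R), s; split.
- exact: z2seq_cst v2_ge_one.
- exact: z2seq_nat.
- exact: hs.
- by move=> n; have := s2 n; rewrite /w expr1n mulr1; congr v2_ge; ring.
- exact: nz1.
Qed.

(* [(u, a) = (u, c)] for [u = b^2 - 4ac]: the identity
   [(b r + u p)^2 - u (b p + r)^2 = 4ac (r^2 - u p^2)] turns a point of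
   [r^2 = u p^2 + a q^2] into one of [r^2 = u p^2 + c (2 a q)^2]. *)
Lemma hilbert1_disc (u a b c : nat -> rat) : z2seq u -> z2seq a -> z2seq b -> z2seq c ->
  (forall n, u n = b n ^+ 2 - 4 * a n * c n) -> ~ z2zero a -> ~ z2zero c ->
  hilbert1 u a -> hilbert1 u c.
Proof.
move=> hD ha hb hc eD na nc [p [q [r [hp hq hr sol nz]]]].
have h4ac : z2seq (fun n => 4 * a n * c n) by z2seq_auto.
have n4ac : ~ z2zero (fun n => 4 * a n * c n).
  apply: z2seq_nonzeroM => //; first by z2seq_auto.
  exact: z2_nonzero_cstM (v2_ge_nat 4) z2_nonzero_4 ha na.
exists (fun n => b n * p n + r n), (fun n => 2 * a n * q n),
       (fun n => b n * r n + u n * p n); split; try by z2seq_auto.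
- move=> n.
  have -> : (b n * r n + u n * p n) ^+ 2
      - (u n * (b n * p n + r n) ^+ 2 + c n * (2 * a n * q n) ^+ 2)
     = 4 * a n * c n * (r n ^+ 2 - (u n * p n ^+ 2 + a n * q n ^+ 2)) by rewrite !eD; ring.
  exact: v2_geMl (z2seq_int n h4ac) (sol n).
- case=> p0 q0 r0; apply: nz.
  have P0 : z2zero p.
    apply: (z2zero_cancel h4ac hp n4ac) => n.
    have -> : 4 * a n * c n * p n = b n * (b n * p n + r n) - (b n * r n + u n * p n).
      by rewrite eD; ring.
    exact/(v2_geB _ (r0 n))/(v2_geMl _ (p0 n))/z2seq_int.
  split => //.
  - apply: (z2zero_cancel (x := fun n => 2 * a n)) q0 => //; first by z2seq_auto.
    exact: z2_nonzero_cstM (v2_ge_nat 2) z2_nonzero_2 ha na.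
  - move=> n; have -> : r n = (b n * p n + r n) - b n * p n by ring.
    exact/(v2_geB (p0 n))/(v2_geMl _ (P0 n))/z2seq_int.
Qed.

(* [(X, d) = (Y, d)] when [XY = g^2 - 4 d w^2] is a norm from [Q_2(sqrt d)]:
   [(g r + 2dwq)^2 - d (g q + 2wr)^2 = (g^2 - 4dw^2)(r^2 - d q^2)]. *)
Lemma hilbert1_norm (X Y g d w : nat -> rat) :
  z2seq X -> z2seq Y -> z2seq g -> z2seq d -> z2seq w ->
  z2zero (fun n => X n * Y n - g n ^+ 2 + 4 * d n * w n ^+ 2) -> ~ z2zero X -> ~ z2zero Y ->
  hilbert1 X d -> hilbert1 Y d.
Proof.
move=> hX hY hg hd hw norm nX nY [p [q [r [hp hq hr sol nz]]]].
have hXY : z2seq (fun n => X n * Y n) by z2seq_auto.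
have nXY : ~ z2zero (fun n => X n * Y n) by apply: z2seq_nonzeroM.
have h2w : z2seq (fun n => 2 * w n) by z2seq_auto.
have h2dw : z2seq (fun n => 2 * d n * w n) by z2seq_auto.
exists (fun n => X n * p n), (fun n => g n * q n + 2 * w n * r n),
       (fun n => g n * r n + 2 * d n * w n * q n); split; try by z2seq_auto.
- move=> n.
  have -> : (g n * r n + 2 * d n * w n * q n) ^+ 2
      - (Y n * (X n * p n) ^+ 2 + d n * (g n * q n + 2 * w n * r n) ^+ 2)
     = X n * Y n * (r n ^+ 2 - (X n * p n ^+ 2 + d n * q n ^+ 2))
       - (X n * Y n - g n ^+ 2 + 4 * d n * w n ^+ 2) * (r n ^+ 2 - d n * q n ^+ 2) by ring.
  apply: v2_geB; first exact: v2_geMl (z2seq_int n hXY) (sol n).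
  have hrq : z2seq (fun n => r n ^+ 2 - d n * q n ^+ 2) by z2seq_auto.
  exact: v2_geMr (z2seq_int n hrq) (norm n).
- case=> p0 q0 r0; apply: nz; split; first exact: (z2zero_cancel hX hp nX p0).
  + apply: (z2zero_cancel hXY hq nXY) => n.
    have -> : X n * Y n * q n = g n * (g n * q n + 2 * w n * r n)
       - 2 * w n * (g n * r n + 2 * d n * w n * q n)
       + (X n * Y n - g n ^+ 2 + 4 * d n * w n ^+ 2) * q n by ring.
    apply: v2_geD; last exact: v2_geMr (z2seq_int n hq) (norm n).
    apply: v2_geB; first exact: v2_geMl (z2seq_int n hg) (q0 n).
    exact: v2_geMl (z2seq_int n h2w) (r0 n).
  + apply: (z2zero_cancel hXY hr nXY) => n.
    have -> : X n * Y n * r n = g n * (g n * r n + 2 * d n * w n * q n)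
       - 2 * d n * w n * (g n * q n + 2 * w n * r n)
       + (X n * Y n - g n ^+ 2 + 4 * d n * w n ^+ 2) * r n by ring.
    apply: v2_geD; last exact: v2_geMr (z2seq_int n hr) (norm n).
    apply: v2_geB; first exact: v2_geMl (z2seq_int n hg) (r0 n).
    exact: v2_geMl (z2seq_int n h2dw) (q0 n).
Qed.

(* [-det M / 2] for the quadric [a y0^2 + b y0y1 + c y0y2 + d y1^2 + e y1y2 + f y2^2]. *)
Definition Wdisc (a b c d e f : rat) : rat :=
  a * e ^+ 2 + b ^+ 2 * f - b * c * e + c ^+ 2 * d - 4 * a * d * f.

Section QuadricFibration.

Variables (a b c d e f w D1 D2 D3 : nat -> rat).
Hypotheses (ha : z2seq a) (hb : z2seq b) (hc : z2seq c) (hd : z2seq d) (he : z2seq e)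
  (hf : z2seq f) (hw : z2seq w).
Hypothesis hW : z2eq (fun n => w n ^+ 2) (fun n => Wdisc (a n) (b n) (c n) (d n) (e n) (f n)).
Hypotheses (eD1 : forall n, D1 n = b n ^+ 2 - 4 * a n * d n)
  (eD2 : forall n, D2 n = e n ^+ 2 - 4 * d n * f n)
  (eD3 : forall n, D3 n = c n ^+ 2 - 4 * a n * f n).

Let hD1 : z2seq D1. Proof. by apply: (z2seq_eq eD1); z2seq_auto. Qed.
Let hD2 : z2seq D2. Proof. by apply: (z2seq_eq eD2); z2seq_auto. Qed.
Let hD3 : z2seq D3. Proof. by apply: (z2seq_eq eD3); z2seq_auto. Qed.

Lemma disc_1mod4 : ~ v2_ge 1 (b 1%N) -> v2_ge 2 (D1 2%N - 1).
Proof.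
move=> b1.
have b2 : v2_ge 1 (b 2%N - 1).
  have -> : b 2%N - 1 = (b 2%N - b 1%N) + (b 1%N - 1) by ring.
  by apply: v2_geD (proj2 hb 1%N) _; have := v2_ge_subX (z2seq_int 1 hb) b1.
have -> : D1 2%N - 1 = (b 2%N - 1) * ((b 2%N - 1) + 2) - 2 ^+ 2 * (a 2%N * d 2%N).
  by rewrite eD1 expr2; ring.
apply: v2_geB; last by have := v2_ge_mul2X 2 (v2_geM (z2seq_int 2 ha) (z2seq_int 2 hd)).
by have := v2_geM b2 (v2_geD b2 (v2_ge_exp2 1)); rewrite expr1.
Qed.

Lemma hilbert1_transfer_d : ~ z2zero D1 -> ~ z2zero D2 -> hilbert1 D1 d -> hilbert1 D2 d.
Proof.
apply: (hilbert1_norm hD1 hD2 (g := fun n => b n * e n - 2 * c n * d n) _ hd hw).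
  by z2seq_auto.
move=> n; have -> : D1 n * D2 n - (b n * e n - 2 * c n * d n) ^+ 2 + 4 * d n * w n ^+ 2
    = 4 * d n * (w n ^+ 2 - Wdisc (a n) (b n) (c n) (d n) (e n) (f n)) by rewrite eD1 eD2 /Wdisc; ring.
exact: v2_geMl (v2_geMr (z2seq_int n hd) (v2_ge_nat 4)) (hW n).
Qed.

Lemma hilbert1_transfer_a : ~ z2zero D1 -> ~ z2zero D3 -> hilbert1 D1 a -> hilbert1 D3 a.
Proof.
apply: (hilbert1_norm hD1 hD3 (g := fun n => b n * c n - 2 * a n * e n) _ ha hw).
  by z2seq_auto.
move=> n; have -> : D1 n * D3 n - (b n * c n - 2 * a n * e n) ^+ 2 + 4 * a n * w n ^+ 2
    = 4 * a n * (w n ^+ 2 - Wdisc (a n) (b n) (c n) (d n) (e n) (f n)) by rewrite eD1 eD3 /Wdisc; ring.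
exact: v2_geMl (v2_geMr (z2seq_int n ha) (v2_ge_nat 4)) (hW n).
Qed.

Lemma hilbert1_fibration : ~ v2_ge 1 (a 1%N) -> ~ v2_ge 1 (b 1%N) ->
  [/\ hilbert1_nonzero D1 a, hilbert1_nonzero D2 d & hilbert1_nonzero D3 f].
Proof.
move=> a1 b1.
have S1 : hilbert1 D1 a := hilbert1_1mod4 hD1 ha (disc_1mod4 b1) a1.
have na : ~ z2zero a by move/(_ 1%N).
have nD1 : ~ z2zero D1.
  move=> /(_ 2%N) D1_0; apply: v2_one_unit.
  have -> : (1 : rat) = D1 2%N - (D1 2%N - 1) by ring.
  exact: v2_ge_le (v2_geB D1_0 (disc_1mod4 b1)).
split => // nD nv.
- exact/hilbert1_transfer_d/(hilbert1_disc hD1 ha hb hd eD1 na nv S1).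
- exact/(hilbert1_disc hD3 ha hc hf eD3 na nv)/hilbert1_transfer_a.
Qed.

End QuadricFibration.

Lemma hilbert1_quadric (a b c d e f w D1 D2 D3 : nat -> rat) :
  z2seq a -> z2seq b -> z2seq c -> z2seq d -> z2seq e -> z2seq f -> z2seq w ->
  z2eq (fun n => w n ^+ 2) (fun n => Wdisc (a n) (b n) (c n) (d n) (e n) (f n)) ->
  (forall n, D1 n = b n ^+ 2 - 4 * a n * d n) ->
  (forall n, D2 n = e n ^+ 2 - 4 * d n * f n) ->
  (forall n, D3 n = c n ^+ 2 - 4 * a n * f n) ->
  [\/ ~ v2_ge 1 (a 1%N) /\ ~ v2_ge 1 (b 1%N), ~ v2_ge 1 (d 1%N) /\ ~ v2_ge 1 (e 1%N)
    | ~ v2_ge 1 (f 1%N) /\ ~ v2_ge 1 (c 1%N)] ->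
  [/\ hilbert1_nonzero D1 a, hilbert1_nonzero D2 d & hilbert1_nonzero D3 f].
Proof.
move=> ha hb hc hd he hf hw hW eD1 eD2 eD3 [[a1 b1]|[d1 e1]|[f1 c1]].
- exact: (hilbert1_fibration ha hb hc hd he hf hw hW eD1 eD2 eD3 a1 b1).
- have hW' : z2eq (fun n => w n ^+ 2) (fun n => Wdisc (d n) (e n) (b n) (f n) (c n) (a n)).
    by apply: z2zero_eq hW => n /=; rewrite /Wdisc; ring.
  have eD3' n : D3 n = c n ^+ 2 - 4 * f n * a n by rewrite eD3; ring.
  have eD1' n : D1 n = b n ^+ 2 - 4 * d n * a n by rewrite eD1; ring.
  by case: (hilbert1_fibration hd he hb hf hc ha hw hW' eD2 eD3' eD1' d1 e1).
- have hW' : z2eq (fun n => w n ^+ 2) (fun n => Wdisc (f n) (c n) (e n) (a n) (b n) (d n)).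
    by apply: z2zero_eq hW => n /=; rewrite /Wdisc; ring.
  have eD3' n : D3 n = c n ^+ 2 - 4 * f n * a n by rewrite eD3; ring.
  have eD2' n : D2 n = e n ^+ 2 - 4 * f n * d n by rewrite eD2; ring.
  by case: (hilbert1_fibration hf hc he ha hb hd hw hW' eD3' eD1 eD2' f1 c1).
Qed.

Lemma det_mx33 (R : comRingType) (M : 'M[R]_3) :
  let m i j := M (inord i) (inord j) in
  \det M = m 0 0 * (m 1 1 * m 2 2 - m 1 2 * m 2 1)
         - m 0 1 * (m 1 0 * m 2 2 - m 1 2 * m 2 0)
         + m 0 2 * (m 1 0 * m 2 1 - m 1 1 * m 2 0).
Proof.
move=> m; have Mm i j : M i j = m i j by rewrite /m !inord_val.
rewrite (expand_det_row _ ord0) !big_ord_recl big_ord0 /cofactor.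
rewrite !(expand_det_row _ ord0) !big_ord_recl !big_ord0 /cofactor !det_mx11.
rewrite !mxE !Mm /= /bump /= !addn0 !add1n !expr0 !expr1 expr2 mulrNN mulr1.
ring.
Qed.

Definition qform (c : 'I_6 -> rat) (x0 x1 x2 : rat) : rat :=
  c (inord 0) * x0 * x0 + c (inord 1) * x0 * x1 + c (inord 2) * x0 * x2
  + c (inord 3) * x1 * x1 + c (inord 4) * x1 * x2 + c (inord 5) * x2 * x2.

Lemma meval_q3 c (v : 'I_3 -> rat) :
  (q3 c).@[v] = qform c (v (inord 0)) (v (inord 1)) (v (inord 2)).
Proof. by rewrite /q3 /quadform !mevalD !mevalM !mevalC !mevalXU. Qed.

Lemma meval_disc_sextic A B C D E F (v : 'I_3 -> rat) :
  (disc_sextic A B C D E F).@[v] =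
  - 2 * Wdisc (q3 A).@[v] (q3 B).@[v] (q3 C).@[v] (q3 D).@[v] (q3 E).@[v] (q3 F).@[v].
Proof.
have val_inord k : (k < 3)%N -> \val (inord k : 'I_3) = k by move=> /inordK.
rewrite /disc_sextic -det_map_mx det_mx33 /= !mxE !val_inord //= !mevalM !rmorph_nat /Wdisc.
ring.
Qed.

Definition sole_unit_coef (c : 'I_6 -> rat) (k : nat) : Prop :=
  v2_zero (c (inord k)) /\ forall i : 'I_6, val i <> k -> v2_pos (c i).

Lemma v2_zero_unit q : v2_zero q -> v2_ge 0 q /\ ~ v2_ge 1 q.
Proof.
case=> _ [num_odd den_odd]; split; apply/in2nP; first by rewrite /in2n expn0 dvd1z den_odd.
by rewrite /in2n expn1 (negbTE num_odd).
Qed.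

Lemma v2_posP q : v2_pos q -> v2_ge 1 q.
Proof. by case=> num_even den_odd; apply/in2nP; rewrite /in2n expn1 num_even den_odd. Qed.

Lemma sole_unit_coef_int c k : (k < 6)%N -> sole_unit_coef c k -> forall i, v2_ge 0 (c i).
Proof.
move=> k6 [ck hc] i; have [ik|ik] := eqVneq (val i) k.
  have -> : i = inord k by apply: val_inj; rewrite /= inordK.
  exact: (v2_zero_unit ck).1.
exact: v2_ge_le (v2_posP (hc i (elimN eqP ik))).
Qed.

Definition qmonomials (x0 x1 x2 : rat) : seq rat :=
  [:: x0 * x0; x0 * x1; x0 * x2; x1 * x1; x1 * x2; x2 * x2].

Lemma qform_sum c x0 x1 x2 :
  qform c x0 x1 x2 = \sum_(j < 6) c (inord j) * (qmonomials x0 x1 x2)`_j.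
Proof. by rewrite !big_ord_recl big_ord0 /= /bump /= !addn0 !add1n /qform; ring. Qed.

Lemma qform_unit c k x0 x1 x2 : (k < 6)%N -> sole_unit_coef c k ->
  v2_ge 0 x0 -> v2_ge 0 x1 -> v2_ge 0 x2 -> ~ v2_ge 1 (qmonomials x0 x1 x2)`_k ->
  ~ v2_ge 1 (qform c x0 x1 x2).
Proof.
move=> k6 [ck hc] h0 h1 h2 mk; set m := qmonomials x0 x1 x2.
have m_int j : v2_ge 0 m`_j.
  by case: j => [|[|[|[|[|[|j]]]]]] /=; rewrite ?nth_nil; apply: v2_geMl || exact: v2_ge0.
have [ck0 ck1] := v2_zero_unit ck.
have rest : v2_ge 1 (\sum_(j < 6 | j != inord k :> 'I_6) c (inord j) * m`_j).
  apply: (big_ind (v2_ge 1)) => [|x y|j jk]; [exact: v2_ge0 | exact: v2_geD |].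
  apply: v2_geMr (m_int j) _; rewrite inord_val; apply/v2_posP/hc => jk'.
  by move: jk; rewrite -jk' inord_val eqxx.
rewrite qform_sum (bigD1 (inord k)) //= inordK // => hq.
have := v2_geB hq rest; rewrite addrK.
exact: v2_unitM ck0 (m_int k) ck1 mk.
Qed.

Lemma z2seq_of_z2 (a : z2) : z2_compat a -> z2seq (fun n => (a n)%:~R).
Proof.
move=> ha; split => n; first exact: v2_ge_int.
by rewrite -rmorphB; apply/v2_ge_intP; rewrite -eqz_mod_dvd ha.
Qed.

Lemma z2_unitP (a : z2) : z2_unit a -> ~ v2_ge 1 (a 1%N)%:~R.
Proof. by move=> ha /v2_ge_intP; rewrite expn1 (negbTE ha). Qed.

Lemma z2seq_evalz2_q3 c x : (forall i, z2_compat (x i)) -> (forall i, v2_ge 0 (c i)) ->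
  z2seq (evalz2 (q3 c) x).
Proof.
move=> hx hc; apply: (z2seq_eq (fun n => meval_q3 c _)).
have hc' j : z2seq (fun _ => c j) := z2seq_cst (hc j).
have hx' j : z2seq (fun n => ((x j n)%:~R : rat)) := z2seq_of_z2 (hx j).
by rewrite /qform; repeat first [apply: hc' | apply: hx' | apply: z2seqD | apply: z2seqM].
Qed.

(* [x_i^2] is the monomial of index [nth 0 [:: 0; 3; 5] i] in [qmonomials]. *)
Lemma evalz2_q3_unit c x (i : 'I_3) : sole_unit_coef c (nth 0 [:: 0; 3; 5] i)%N ->
  z2_unit (x i) -> ~ v2_ge 1 (evalz2 (q3 c) x 1%N).
Proof.
move=> hc /z2_unitP; rewrite /evalz2 meval_q3 -(inord_val i).
case: i hc => [[|[|[|//]]] ?] /= hc xi1;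
  by apply: qform_unit hc _ _ _ (v2_unitM _ _ xi1 xi1) => //; apply: v2_ge_int.
Qed.

Lemma z2zeroP u : z2val_zero u <-> z2zero u.
Proof. by split=> h n; apply/in2nP. Qed.

Lemma evalz2_disc (P Q R : {mpoly rat[3]}) x n :
  evalz2 (P ^+ 2 - 4%:R * Q * R) x n = evalz2 P x n ^+ 2 - 4 * evalz2 Q x n * evalz2 R x n.
Proof. by rewrite /evalz2 !expr2 mevalB !mevalM rmorph_nat. Qed.

Lemma z2seq_evalz2_disc (P Q R : {mpoly rat[3]}) x :
  z2seq (evalz2 P x) -> z2seq (evalz2 Q x) -> z2seq (evalz2 R x) ->
  z2seq (evalz2 (P ^+ 2 - 4%:R * Q * R) x).
Proof. by move=> *; apply: (z2seq_eq (evalz2_disc P Q R x)); z2seq_auto. Qed.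

Lemma rep_inv_zero_atP (P Q : {mpoly rat[3]}) x :
  z2seq (evalz2 P x) -> z2seq (evalz2 Q x) ->
  hilbert1_nonzero (evalz2 P x) (evalz2 Q x) -> rep_inv_zero_at P Q x.
Proof. by move=> hP hQ h1 nP nQ; apply/hilbert1_inv2/h1; rewrite // -z2zeroP. Qed.

Theorem lemma4p5 (A B C D E F : 'I_6 -> rat) :
  biproj_hypersurface_smooth (Zpoly A B C D E F) ->
  plane_curve_smooth (disc_sextic A B C D E F) ->
  v2_zero (A (inord 0)) -> v2_zero (B (inord 0)) -> v2_zero (C (inord 5)) ->
  v2_zero (D (inord 3)) -> v2_zero (E (inord 3)) -> v2_zero (F (inord 5)) ->
  (forall i : 'I_6, val i <> 0%N -> v2_pos (A i)) ->
  (forall i : 'I_6, val i <> 0%N -> v2_pos (B i)) ->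
  (forall i : 'I_6, val i <> 5%N -> v2_pos (C i)) ->
  (forall i : 'I_6, val i <> 3%N -> v2_pos (D i)) ->
  (forall i : 'I_6, val i <> 3%N -> v2_pos (E i)) ->
  (forall i : 'I_6, val i <> 5%N -> v2_pos (F i)) ->
  forall (x : 'I_3 -> z2) (w : z2),
    X1_Q2_point A B C D E F x w -> alpha1_inv_zero_at A B C D E F x.
Proof.
move=> _ _ A0 B0 C5 D3 E3 F5 hA hB hC hD hE hF x w [hx hw [i xi] onX1].
have uA : sole_unit_coef A 0 := conj A0 hA; have uB : sole_unit_coef B 0 := conj B0 hB.
have uC : sole_unit_coef C 5 := conj C5 hC; have uD : sole_unit_coef D 3 := conj D3 hD.
have uE : sole_unit_coef E 3 := conj E3 hE; have uF : sole_unit_coef F 5 := conj F5 hF.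
have hq3 c k : (k < 6)%N -> sole_unit_coef c k -> z2seq (evalz2 (q3 c) x).
  by move=> k6 /(sole_unit_coef_int k6) /(z2seq_evalz2_q3 hx).
have hW : z2eq (fun n => (w n)%:~R ^+ 2) (fun n => Wdisc (evalz2 (q3 A) x n)
    (evalz2 (q3 B) x n) (evalz2 (q3 C) x n) (evalz2 (q3 D) x n) (evalz2 (q3 E) x n) (evalz2 (q3 F) x n)).
  by move=> n; have /in2nP := onX1 n; rewrite /evalz2 meval_disc_sextic; congr v2_ge; field.
have units : [\/ ~ v2_ge 1 (evalz2 (q3 A) x 1%N) /\ ~ v2_ge 1 (evalz2 (q3 B) x 1%N),
    ~ v2_ge 1 (evalz2 (q3 D) x 1%N) /\ ~ v2_ge 1 (evalz2 (q3 E) x 1%N)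
  | ~ v2_ge 1 (evalz2 (q3 F) x 1%N) /\ ~ v2_ge 1 (evalz2 (q3 C) x 1%N)].
  by case: i xi => [[|[|[|//]]] ?] xi; [apply: Or31 | apply: Or32 | apply: Or33];
    split; apply: (evalz2_q3_unit _ xi).
have zA := hq3 A 0%N isT uA; have zB := hq3 B 0%N isT uB; have zC := hq3 C 5%N isT uC.
have zD := hq3 D 3%N isT uD; have zE := hq3 E 3%N isT uE; have zF := hq3 F 5%N isT uF.
have [S1 S2 S3] := hilbert1_quadric zA zB zC zD zE zF (z2seq_of_z2 hw) hW
  (evalz2_disc _ _ _ x) (evalz2_disc _ _ _ x) (evalz2_disc _ _ _ x) units.
by split; apply: rep_inv_zero_atP => //; apply: z2seq_evalz2_disc.
Qed.
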